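(* Let $\mathbf{CMet}$ be the category of complete generalized metric spaces and nonexpanding maps, enriched over itself. For every $\delta>0$, the hom-functor $\mathbf{CMet}(2_\delta,-)\colon\mathbf{CMet}\to\mathbf{CMet}$ preserves directed colimits of diagrams consisting of convex complete metric spaces and isometries; that is, if $k_i\colon K_i\to K$ ($i\in I$) is a colimit in $\mathbf{CMet}$ of a directed diagram of convex spaces $K_i$ and isometries, then the canonical map $\operatorname{colim}_i\mathbf{CMet}(2_\delta,K_i)\to\mathbf{CMet}(2_\delta,K)$ is an isomorphism in $\mathbf{CMet}$.
   Context: A generalized metric space allows distance $\infty$; morphisms of $\mathbf{CMet}$ are nonexpanding maps $f$ ($d(fx,fy)\le d(x,y)$). The internal hom $\mathbf{CMet}(A,B)$ is the set of nonexpanding maps with the supremum metric $d(f,g)=\sup_x d(fx,gx)$. For $\delta>0$, $2_\delta$ is the two-point metric space whose points are at distance $\delta$. A metric space is convex if for any points $x,y$ there is $z$ with $d(x,z)+d(z,y)=d(x,y)$. A directed colimit of isometries in $\mathbf{CMet}$ is the completion of the union (directed colimit in metric spaces) of the diagram. *)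

From HB Require Import structures.
From mathcomp Require Import all_boot all_order all_algebra.
From mathcomp Require Import all_classical all_reals ereal.
Set Implicit Arguments. Unset Strict Implicit. Unset Printing Implicit Defensive.
Import Order.TTheory GRing.Theory Num.Theory.
Local Open Scope classical_set_scope.
Local Open Scope ring_scope.
Local Open Scope ereal_scope.

Record MetSp (R : realType) := MkMetSp {
  car :> Type;
  dist : car -> car -> \bar R }.
Arguments dist {R} m _ _.

Section Defs.
Variable R : realType.

Definition gen_metric (X : MetSp R) : Prop :=
  [/\ forall x y : X, 0 <= dist X x y,
      forall x : X, dist X x x = 0,
      forall x y : X, dist X x y = 0 -> x = y,
      forall x y : X, dist X x y = dist X y x &
      forall x y z : X, dist X x z <= dist X x y + dist X y z].

Definition cauchy_seq (X : MetSp R) (u : nat -> X) : Prop :=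
  forall e : R, (0 < e)%R -> exists N : nat, forall m n : nat,
    (N <= m)%N -> (N <= n)%N -> dist X (u m) (u n) < e%:E.

Definition converges_to (X : MetSp R) (u : nat -> X) (l : X) : Prop :=
  forall e : R, (0 < e)%R -> exists N : nat, forall n : nat,
    (N <= n)%N -> dist X (u n) l < e%:E.

Definition complete_sp (X : MetSp R) : Prop :=
  forall u : nat -> X, cauchy_seq u -> exists l : X, converges_to u l.

Definition cmet (X : MetSp R) : Prop := gen_metric X /\ complete_sp X.

Definition nonexp (X Y : MetSp R) (f : X -> Y) : Prop :=
  forall x y : X, dist Y (f x) (f y) <= dist X x y.

Definition isometric (X Y : MetSp R) (f : X -> Y) : Prop :=
  forall x y : X, dist Y (f x) (f y) = dist X x y.

(* (Menger) convexity: distinct points have a point strictly between them *)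
Definition convex (X : MetSp R) : Prop :=
  forall x y : X, x <> y ->
    exists z : X, [/\ z <> x, z <> y & dist X x z + dist X z y = dist X x y].

Lemma isometric_nonexp (X Y : MetSp R) (f : X -> Y) : isometric f -> nonexp f.
Proof. by move=> H x y; rewrite H. Qed.

Lemma nonexp_comp (X Y Z : MetSp R) (g : Y -> Z) (f : X -> Y) :
  nonexp g -> nonexp f -> nonexp (g \o f).
Proof. by move=> Hg Hf x y; apply: le_trans (Hg _ _) (Hf _ _). Qed.

Definition two_sp (delta : R) : MetSp R :=
  @MkMetSp R bool (fun x y => if x == y then 0 else delta%:E).

Definition hom_sp (A B : MetSp R) : MetSp R :=
  @MkMetSp R {f : A -> B | nonexp f}
    (fun f g => ereal_sup (range (fun x : A => dist B (sval f x) (sval g x)))).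

Definition hom_map (A B C : MetSp R) (h : B -> C) (hh : nonexp h) :
  hom_sp A B -> hom_sp A C :=
  fun f => exist _ (h \o sval f) (nonexp_comp hh (svalP f)).

Definition directed_poset (I : Type) (le : I -> I -> Prop) : Prop :=
  [/\ forall i, le i i,
      forall i j k, le i j -> le j k -> le i k,
      forall i j, le i j -> le j i -> i = j,
      inhabited I &
      forall i j, exists k, le i k /\ le j k].

Definition is_colimit (I : Type) (le : I -> I -> Prop) (D : I -> MetSp R)
  (F : forall i j, le i j -> D i -> D j) (C : MetSp R)
  (c : forall i, D i -> C) : Prop :=
  [/\ cmet C,
      forall i, nonexp (c i),
      forall i j (h : le i j) (x : D i), c j (F i j h x) = c i x &
      forall L : MetSp R, cmet L ->
      forall l : forall i, D i -> L,
        (forall i, nonexp (l i)) ->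
        (forall i j (h : le i j) (x : D i), l j (F i j h x) = l i x) ->
        exists u : C -> L,
          [/\ nonexp u,
              forall i (x : D i), u (c i x) = l i x &
              forall u' : C -> L, nonexp u' ->
                (forall i (x : D i), u' (c i x) = l i x) ->
                forall y, u' y = u y]].

End Defs.

From HB Require Import structures.
From mathcomp Require Import all_boot all_order all_algebra.
From mathcomp Require Import all_classical all_reals ereal.
From mathcomp Require Import topology normedtype sequences lra.
Import Order.TTheory GRing.Theory Num.Theory.
Import numFieldNormedType.Exports.

(* Let k_i : D_i -> K be such a colimit.
   1. The injections k_i are isometries (test the universal property
      against the distance-to-a-point cocone into the extended real line)
      and the union of their images is dense in K (the approximable points
      form a complete subspace through which the cocone factors).
   2. Conversely, a compatible cocone of isometries into a complete space
      with dense image is a colimit: maps out of the diagram extend uniquely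
      by continuity.
   3. CMet(2_delta, B) is complete when B is, and postcomposition with an
      isometry is an isometry.
   4. Density of the cocone CMet(2_delta, k_i): a map 2_delta -> K is a
      pair (a, b) with d(a, b) <= delta; approximate a and b by points x, z
      of a common stage D_m, so d(x, z) <= delta + e; Menger's theorem for
      complete convex spaces (proved with greedy chains) yields w with
      d(x, w) <= delta and d(w, z) <= e, and (x, w) approximates (a, b).
   The theorem is 2 applied to the cocone CMet(2_delta, k_i), using 1, 3, 4. *)

Local Open Scope classical_set_scope.
Local Open Scope ring_scope.

Section GenMetric.
Context {R : realType} {X : MetSp R}.
Hypothesis hX : gen_metric X.
Local Open Scope ereal_scope.
Local Notation d := (dist X).

Lemma dist_ge0 (x y : X) : 0 <= d x y. Proof. by case: hX. Qed.
Lemma dist_refl (x : X) : d x x = 0. Proof. by case: hX. Qed.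
Lemma dist_sym (x y : X) : d x y = d y x. Proof. by case: hX. Qed.
Lemma dist_tri (x y z : X) : d x z <= d x y + d y z. Proof. by case: hX. Qed.

Lemma dist_tri_lt {x y z : X} {a b : R} :
  d x y < a%:E -> d y z < b%:E -> d x z < (a + b)%:E.
Proof. by move=> h1 h2; rewrite EFinD; apply: le_lt_trans (dist_tri x y z) (lteD h1 h2). Qed.

Lemma dist_small_eq (x y : X) : (forall e : R, (0 < e)%R -> d x y <= e%:E) -> x = y.
Proof.
move=> small; case: hX => _ _ eq0 _ _; apply/eq0/eqP; rewrite eq_le dist_ge0 andbT.
by apply/lee_addgt0Pr => e e0; rewrite add0e small.
Qed.

End GenMetric.

Definition eps {R : realType} (n : nat) : R := (n.+1%:R)^-1.

Lemma eps_gt0 {R : realType} n : 0 < eps n :> R.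
Proof. by rewrite invr_gt0 ltr0n. Qed.

Lemma eps_small {R : realType} {e : R} : 0 < e -> exists N, forall n, (N <= n)%N -> eps n < e.
Proof.
move=> e0; exists (Num.Def.truncn e^-1) => n hn.
rewrite /eps invf_plt ?posrE ?ltr0n //.
by apply: lt_le_trans (truncnS_gt _) _; rewrite ler_nat.
Qed.

Lemma real_cauchy (R : realType) (w : nat -> R) :
  (forall e : R, 0 < e -> exists N, forall m n, (N <= m)%N -> (N <= n)%N -> `|w m - w n| < e) ->
  exists l, forall e : R, 0 < e -> exists N, forall n, (N <= n)%N -> `|w n - l| < e.
Proof.
move=> hw.
have /cauchy_cvgP cw : cauchy (w @ \oo).
  apply/cauchy_ballP => e e0; have [N hN] := hw e e0; rewrite near_map2.
  exists ([set m | (N <= m)%N], [set m | (N <= m)%N]); first by split; exists N.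
  by move=> [m n] [/= hm hn]; rewrite /ball /= distrC; apply: hN.
have [l wl] := (cvg_ex (w @ \oo)).1 cw; exists l => e e0.
have /cvgrPdist_lt/(_ e e0) [N _ hN] := wl.
by exists N => n hn; rewrite distrC; apply: hN.
Qed.

(* This is how maps are extended by
   continuity from a dense subset. *)
Lemma complete_approx (R : realType) (L : MetSp R) (S : R -> set L) :
  cmet L ->
  (forall e : R, 0 < e -> exists p, S e p) ->
  (forall (e e' : R) p q, 0 < e -> 0 < e' -> S e p -> S e' q ->
      (dist L p q <= (e + e')%:E)%E) ->
  exists c, forall (e : R) p, 0 < e -> S e p -> (dist L p c <= e%:E)%E.
Proof.
case=> hg hc hne hdiam.
have [s hs] := choice (fun n : nat => hne _ (eps_gt0 n)).
have [c hcv] : exists c, converges_to s c.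
  apply: hc => e e0; have [N hN] := eps_small (divr_gt0 e0 (ltr0n _ 2)).
  exists N => m n hm hn.
  apply: le_lt_trans (hdiam _ _ _ _ (eps_gt0 m) (eps_gt0 n) (hs m) (hs n)) _.
  by rewrite lte_fin [ltRHS]splitr ltrD ?hN.
exists c => e p e0 hp; apply/lee_addgt0Pr => r r0.
have r2 := divr_gt0 r0 (ltr0n _ 2).
have [N1 h1] := eps_small r2; have [N2 h2] := hcv _ r2; pose n := maxn N1 N2.
apply: le_trans (dist_tri hg p (s n) c) _.
rewrite [in leRHS](splitr r) EFinD addeA; apply: leeD; last exact/ltW/h2/leq_maxr.
apply: le_trans (hdiam _ _ _ _ e0 (eps_gt0 n) hp (hs n)) _.
by rewrite EFinD lee_fin lerD // ltW // h1 // leq_maxl.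
Qed.

Lemma dist_le_limit {R : realType} {X : MetSp R} (hX : gen_metric X) (a l : X)
    (v : nat -> X) (N : nat) (c : \bar R) :
  converges_to v l -> (forall m, (N <= m)%N -> (dist X a (v m) <= c)%E) ->
  (dist X a l <= c)%E.
Proof.
move=> vl bound; apply/lee_addgt0Pr => r r0; have [M hM] := vl r r0.
apply: le_trans (dist_tri hX a (v (maxn N M)) l) _.
by apply: leeD; [apply/bound/leq_maxl | apply/ltW/hM/leq_maxr].
Qed.

(* It serves as a test object: the
   distance to a fixed point is a nonexpanding map into it. *)
Section ExtendedRealLine.
Context {R : realType}.
Local Open Scope ereal_scope.

Definition ereal_dist (a b : \bar R) : \bar R := if a == b then 0 else `|a - b|.
Definition ereal_sp : MetSp R := @MkMetSp R (\bar R) ereal_dist.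

Lemma ereal_dist_fin (r s : R) : ereal_dist r%:E s%:E = `|r - s|%:E.
Proof. by rewrite /ereal_dist; case: eqP => [[->]|_] //; rewrite subrr normr0. Qed.

Lemma ereal_dist0 (a : \bar R) : 0 <= a -> ereal_dist 0 a = a.
Proof.
rewrite /ereal_dist; case: eqP => // _; case: a => [a| |] //= a0.
by rewrite sub0r normrN ger0_norm // -lee_fin.
Qed.

Lemma ereal_dist_le (x y c : \bar R) : 0 <= c ->
  x <= y + c -> y <= x + c -> ereal_dist x y <= c.
Proof.
rewrite /ereal_dist; case: eqP => // xy; case: c => [c| |] // c0; last by rewrite leey.
move: xy; case: x => [x| |]; case: y => [y| |] //= _; rewrite -?EFinD ?lee_fin //.
by move=> h1 h2; rewrite ler_norml; apply/andP; split; lra.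
Qed.

Lemma ereal_sp_metric : gen_metric ereal_sp.
Proof.
have d0 (x y : \bar R) : 0 <= ereal_dist x y by rewrite /ereal_dist; case: eqP.
have dxx (x : \bar R) : ereal_dist x x = 0 by rewrite /ereal_dist eqxx.
split => //=.
- move=> x y; rewrite /ereal_dist; case: eqP => // _.
  case: x y => [x| |] [y| |] //= [] /eqP.
  by rewrite normr_eq0 subr_eq0 => /eqP ->.
- move=> x y; rewrite /ereal_dist eq_sym; case: eqP => // _.
  by case: x y => [x| |] [y| |] //=; rewrite distrC.
- move=> x y z; case: (eqVneq x z) => [<-|xz]; first by rewrite dxx adde_ge0.
  case: (eqVneq x y) => [<-|xy]; first by rewrite dxx add0e.
  case: (eqVneq y z) => [<-|yz]; first by rewrite dxx adde0.
  rewrite /ereal_dist (negbTE xz) (negbTE xy) (negbTE yz).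
  move: xz xy yz; case: x => [x| |]; case: y => [y| |]; case: z => [z| |] //= _ _ _;
    rewrite ?leey // -EFinD lee_fin.
  by apply: le_trans (ler_normD _ _); rewrite addrA subrK.
Qed.

(* A Cauchy sequence is eventually constant at an infinite point, or
   eventually real and then converges by completeness of the reals. *)
Lemma ereal_sp_complete : complete_sp ereal_sp.
Proof.
move=> u hu; have [N hN] := hu 1%R ltr01.
have near n : (N <= n)%N -> ereal_dist (u n) (u N) < 1%:E by move=> hn; exact: hN.
have stuck n : (N <= n)%N -> u N \isn't a fin_num -> u n = u N.
  move=> /near; rewrite /ereal_dist; case: eqP => // _.
  by case: (u n) (u N) => [?| |] [?| |].
have [finN|infN] := boolP (u N \is a fin_num); last first.
  exists (u N) => e e0; exists N => n hn /=.
  by rewrite (stuck n hn infN) /ereal_dist eqxx lte_fin.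
pose w n := fine (u (n + N)%N).
have uw n : u (n + N)%N = (w n)%:E.
  have /near : (N <= n + N)%N by rewrite leq_addl.
  rewrite /w /ereal_dist; case: eqP => [->|_]; first by rewrite fineK.
  by move: finN; case: (u (n + N)%N) (u N) => [?| |] [?| |].
have [|l hl] := @real_cauchy R w.
  move=> e e0; have [M hM] := hu e e0; exists M => m n hm hn.
  have := hM (m + N)%N (n + N)%N (leq_trans hm (leq_addr _ _)) (leq_trans hn (leq_addr _ _)).
  by rewrite /= !uw ereal_dist_fin lte_fin.
exists l%:E => e e0; have [M hM] := hl e e0; exists (M + N)%N => n hn.
have hN' : (N <= n)%N by apply: leq_trans hn; rewrite leq_addl.
rewrite /= -(subnK hN') uw ereal_dist_fin lte_fin hM //.
by rewrite leq_subRL // addnC.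
Qed.

Lemma ereal_sp_cmet : cmet ereal_sp.
Proof. by split; [exact: ereal_sp_metric | exact: ereal_sp_complete]. Qed.

End ExtendedRealLine.

Lemma sig_eq (A : Type) (P : A -> Prop) (a b : {x | P x}) : sval a = sval b -> a = b.
Proof. by case: a b => a pa [b pb] /= ab; subst b; congr exist; apply: Prop_irrelevance. Qed.

Section DirectedColimit.
Context {R : realType} {I : Type} {le : I -> I -> Prop} (hI : directed_poset le).
Context {D : I -> MetSp R} {F : forall i j, le i j -> D i -> D j}.
Hypothesis hDg : forall i, gen_metric (D i).
Hypothesis hFiso : forall {i j} (h : le i j), isometric (F i j h).
Hypothesis hFcomp : forall {i j k} (hij : le i j) (hjk : le j k) (hik : le i k) (x : D i),
  F j k hjk (F i j hij x) = F i k hik x.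
Context {K : MetSp R} {k : forall i, D i -> K}.
Hypothesis hcolim : is_colimit F k.
Local Open Scope ereal_scope.

Lemma le_trans_dir {i j m} : le i j -> le j m -> le i m.
Proof. by case: hI => _ tr _ _ _; apply: tr. Qed.

Lemma upper_bound i j : exists m, le i m /\ le j m.
Proof. by case: hI. Qed.

Lemma colim_cmet : cmet K. Proof. by case: hcolim. Qed.
Lemma colim_nonexp i : nonexp (k i). Proof. by case: hcolim. Qed.
Lemma colim_compat i j (h : le i j) (x : D i) : k j (F i j h x) = k i x.
Proof. by case: hcolim. Qed.

Lemma stage_dist_indep i j (x : D i) (z : D j) m m'
    (hi : le i m) (hj : le j m) (hi' : le i m') (hj' : le j m') :
  dist (D m) (F i m hi x) (F j m hj z) = dist (D m') (F i m' hi' x) (F j m' hj' z).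
Proof.
have [M [hm hm']] := upper_bound m m'.
rewrite -(hFiso hm) -(hFiso hm').
by rewrite !(hFcomp _ _ (le_trans_dir hi hm)) !(hFcomp _ _ (le_trans_dir hj hm)).
Qed.

Section DistanceCocone.
Context {i : I} (x : D i).

Definition ub j : I := sval (cid (upper_bound i j)).
Lemma ub_le j : le i (ub j) /\ le j (ub j). Proof. by rewrite /ub; case: cid. Qed.

Definition dist_cocone {j} (z : D j) : ereal_sp :=
  dist (D (ub j)) (F i (ub j) (ub_le j).1 x) (F j (ub j) (ub_le j).2 z).

Lemma dist_coconeE {j} (z : D j) {m} (hi : le i m) (hj : le j m) :
  dist_cocone z = dist (D m) (F i m hi x) (F j m hj z).
Proof. exact: stage_dist_indep. Qed.

Lemma dist_cocone_nonexp j : nonexp (@dist_cocone j).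
Proof.
move=> z z' /=; rewrite /dist_cocone -(hFiso (ub_le j).2 z z').
set m := ub j; set a := F i m _ x; set b := F j m _ z; set b' := F j m _ z'.
apply: ereal_dist_le; first exact: dist_ge0.
  by apply: le_trans (dist_tri (hDg m) a b' b) _; rewrite (dist_sym (hDg m) b').
exact: dist_tri.
Qed.

Lemma dist_cocone_compat j j' (h : le j j') (z : D j) :
  dist_cocone (F j j' h z) = dist_cocone z.
Proof.
have hjj' := le_trans_dir h (ub_le j').2.
by rewrite (dist_coconeE z (ub_le j').1 hjj') /dist_cocone (hFcomp _ _ hjj').
Qed.

Lemma dist_cocone_self (y : D i) : dist_cocone y = dist (D i) x y.
Proof.
by rewrite (dist_coconeE y (ub_le i).1 (ub_le i).1) hFiso.
Qed.

End DistanceCocone.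

(* Testing the colimit against [ereal_sp] shows that no distance shrinks. *)
Lemma colim_isometric i : isometric (k i).
Proof.
move=> x y; apply/eqP; rewrite eq_le colim_nonexp /=.
case: hcolim => _ _ _ /(_ ereal_sp ereal_sp_cmet _ (dist_cocone_nonexp x)).
case/(_ (dist_cocone_compat x)) => u [u_ne uk _].
have := u_ne (k i x) (k i y); rewrite /= !uk !dist_cocone_self (dist_refl (hDg i)).
by rewrite ereal_dist0 // dist_ge0.
Qed.

(* Points of [K] approximated by points of the diagram form a complete
   subspace through which the colimit cocone factors; by uniqueness of
   factorizations this subspace is all of [K]. *)
Definition approximable (y : K) : Prop :=
  forall e : R, (0 < e)%R -> exists i (x : D i), dist K (k i x) y < e%:E.

Definition approx_sp : MetSp R :=
  @MkMetSp R {y : K | approximable y} (fun a b => dist K (sval a) (sval b)).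

Lemma approx_sp_cmet : cmet approx_sp.
Proof.
have [hKg hKc] := colim_cmet; split.
  split => /= [a b|a|a b ab|a b|a b c]; rewrite ?dist_refl ?dist_ge0 ?dist_tri //.
    by apply: sig_eq; case: hKg => _ _ eq0 _ _; apply: eq0.
  exact: dist_sym.
move=> u hu; have [l hl] := hKc (fun n => sval (u n)) hu.
have al : approximable l.
  move=> e e0; have e2 := divr_gt0 e0 (ltr0n _ 2).
  have [N hN] := hl _ e2; have [i [x hx]] := svalP (u N) _ e2.
  by exists i, x; rewrite (splitr e); exact: (dist_tri_lt hKg hx (hN N (leqnn N))).
by exists (exist _ l al) => e e0; have [N hN] := hl _ e0; exists N.
Qed.

Lemma colim_dense (y : K) : approximable y.
Proof.
have ak i (x : D i) : approximable (k i x).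
  by move=> e e0; exists i, x; rewrite (dist_refl colim_cmet.1).
pose c i (x : D i) : approx_sp := exist _ (k i x) (ak i x).
have c_ne i : nonexp (c i) by move=> a b; exact: colim_nonexp.
have c_compat i j (h : le i j) (x : D i) : c j (F i j h x) = c i x.
  by apply: sig_eq; exact: colim_compat.
case: hcolim => _ _ _ univ.
have [r [r_ne rc _]] := univ _ approx_sp_cmet c c_ne c_compat.
have [u0 [_ _ uniq]] := univ _ colim_cmet k colim_nonexp colim_compat.
have ry : sval (r y) = u0 y.
  by apply: (uniq (fun z => sval (r z))) => [a b|j x]; [exact: r_ne | rewrite rc].
have idy : y = u0 y by apply: (uniq id).
by rewrite idy -ry; apply: svalP.
Qed.

End DirectedColimit.

(* Conversely, a compatible cocone of isometries from a directed diagram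
   into a complete space is a colimit as soon as the union of its images is
   dense: maps out of the diagram extend uniquely by continuity. *)
Section DenseCocone.
Context {R : realType} {I : Type} {le : I -> I -> Prop} (hI : directed_poset le).
Context {D : I -> MetSp R} {F : forall i j, le i j -> D i -> D j}.
Context {C : MetSp R} {c : forall i, D i -> C}.
Hypothesis hC : cmet C.
Hypothesis c_iso : forall i, isometric (c i).
Hypothesis c_compat : forall {i j} (h : le i j) (x : D i), c j (F i j h x) = c i x.
Hypothesis c_dense : forall (y : C) {e : R}, 0 < e ->
  exists i (x : D i), (dist C (c i x) y < e%:E)%E.
Local Open Scope ereal_scope.

Section Extension.
Context {L : MetSp R} (hL : cmet L) {l : forall i, D i -> L}.
Hypothesis l_ne : forall i, nonexp (l i).
Hypothesis l_compat : forall {i j} (h : le i j) (x : D i), l j (F i j h x) = l i x.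

Lemma cocone_dist_le {i j} (x : D i) (x' : D j) :
  dist L (l i x) (l j x') <= dist C (c i x) (c j x').
Proof.
have [m [hi hj]] := upper_bound hI i j.
rewrite -(l_compat hi) -(l_compat hj) -(c_compat hi) -(c_compat hj) c_iso.
exact: l_ne.
Qed.

Definition near_values (y : C) (e : R) : set L :=
  [set p | exists i (x : D i), dist C (c i x) y < e%:E /\ p = l i x].

Lemma extension_exists : exists u : C -> L,
  forall (y : C) (e : R) p, (0 < e)%R -> near_values y e p -> dist L p (u y) <= e%:E.
Proof.
suff ex y : exists v, forall (e : R) p, (0 < e)%R -> near_values y e p ->
    dist L p v <= e%:E by have [u hu] := choice ex; exists u.
apply: complete_approx hL _ _.
  by move=> e e0; have [i [x hx]] := c_dense y e0; exists (l i x), i, x.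
move=> e e' _ _ _ _ [i [x [hx ->]]] [j [x' [hx' ->]]].
apply: le_trans (cocone_dist_le x x') _; apply: le_trans (dist_tri hC.1 _ y _) _.
by rewrite EFinD leeD // ltW // (dist_sym hC.1).
Qed.

Context {u : C -> L}.
Hypothesis u_near : forall (y : C) (e : R) p, (0 < e)%R -> near_values y e p ->
  dist L p (u y) <= e%:E.

Lemma extension_on_diagram i (x : D i) : u (c i x) = l i x.
Proof.
apply: esym; apply: (dist_small_eq hL.1) => e e0; apply: u_near => //.
by exists i, x; rewrite (dist_refl hC.1).
Qed.

Lemma extension_nonexp : nonexp u.
Proof.
have hLg := hL.1; have hCg := hC.1.
move=> y y'; apply/lee_addgt0Pr => r r0; have e0 := divr_gt0 r0 (ltr0n R 4).
set e := (r / 4%:R)%R in e0 *.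
have [i [x hx]] := c_dense y e0; have [j [x' hx']] := c_dense y' e0.
have near_y : dist L (u y) (l i x) <= e%:E.
  by rewrite (dist_sym hLg); apply: u_near => //; exists i, x.
have near_y' : dist L (l j x') (u y') <= e%:E by apply: u_near => //; exists j, x'.
have mid : dist L (l i x) (l j x') <= e%:E + (dist C y y' + e%:E).
  apply: le_trans (cocone_dist_le x x') _; apply: le_trans (dist_tri hCg _ y _) _.
  apply: leeD; first exact: ltW.
  apply: le_trans (dist_tri hCg _ y' _) _; apply: leeD => //.
  by rewrite (dist_sym hCg); exact: ltW.
apply: le_trans (dist_tri hLg _ (l i x) _) _.
apply: le_trans (leeD near_y (dist_tri hLg _ (l j x') _)) _.
apply: le_trans (leeD (lexx _) (leeD mid near_y')) _.
have := dist_ge0 hCg y y'; case: (dist C y y') => [s| |] // s0.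
by rewrite -!EFinD lee_fin /e; lra.
Qed.

End Extension.

Lemma dense_unique {L : MetSp R} (hL : cmet L) (u u' : C -> L) :
  nonexp u -> nonexp u' -> (forall i (x : D i), u (c i x) = u' (c i x)) ->
  forall y, u y = u' y.
Proof.
move=> u_ne u'_ne eq_c y; apply: (dist_small_eq hL.1) => e e0.
have [i [x hx]] := c_dense y (divr_gt0 e0 (ltr0n R 2)).
apply: le_trans (dist_tri hL.1 _ (u (c i x)) _) _.
rewrite [in leRHS](splitr e) EFinD; apply: leeD.
  by apply: le_trans (u_ne _ _) _; rewrite (dist_sym hC.1) ltW.
by rewrite eq_c; apply: le_trans (u'_ne _ _) _; rewrite ltW.
Qed.

Lemma dense_cocone_colimit : is_colimit F c.
Proof.
split => // [i|L hL l l_ne l_compat]; first exact/isometric_nonexp/c_iso.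
have [u u_near] := extension_exists hL l_ne l_compat.
have u_ne := extension_nonexp hL l_ne l_compat u_near.
have u_ext := extension_on_diagram hL u_near.
exists u; split => // u' u'_ne u'_ext y.
by apply: dense_unique hL _ _ u'_ne u_ne _ y => i x; rewrite u'_ext u_ext.
Qed.

End DenseCocone.

Section HomSpace.
Context {R : realType} {A : MetSp R}.
Local Open Scope ereal_scope.

Lemma hom_dist_ub {B : MetSp R} (f g : hom_sp A B) x :
  dist B (sval f x) (sval g x) <= dist (hom_sp A B) f g.
Proof. by apply: ereal_sup_ubound; exists x. Qed.

Lemma hom_dist_le {B : MetSp R} (f g : hom_sp A B) c :
  (forall x, dist B (sval f x) (sval g x) <= c) -> dist (hom_sp A B) f g <= c.
Proof. by move=> bound; apply: ge_ereal_sup => _ [x _ <-]. Qed.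

Lemma hom_eq {B : MetSp R} (f g : hom_sp A B) : (forall x, sval f x = sval g x) -> f = g.
Proof. by move=> fg; apply: sig_eq; apply: funext. Qed.

Lemma hom_map_nonexp {B C : MetSp R} (h : B -> C) (hh : nonexp h) :
  nonexp (hom_map (A:=A) hh).
Proof.
move=> f g; apply: hom_dist_le => x /=; apply: le_trans (hh _ _) _.
exact: hom_dist_ub.
Qed.

Lemma hom_map_isometric {B C : MetSp R} (h : B -> C) (hh : nonexp h) :
  isometric h -> isometric (hom_map (A:=A) hh).
Proof.
move=> h_iso f g; apply/eqP; rewrite eq_le hom_map_nonexp /=.
by apply: hom_dist_le => x; rewrite -h_iso; exact: (hom_dist_ub (hom_map hh f) (hom_map hh g)).
Qed.

Context {B : MetSp R}.
Hypothesis hB : gen_metric B.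
Local Notation H := (hom_sp A B).

Lemma hom_metric (a0 : A) : gen_metric H.
Proof.
have sym (f g : H) : dist H f g <= dist H g f.
  by apply: hom_dist_le => x; rewrite dist_sym //; apply: hom_dist_ub.
split.
- by move=> f g; apply: le_trans (dist_ge0 hB _ _) (hom_dist_ub f g a0).
- move=> f; apply/eqP; rewrite eq_le (le_trans (dist_ge0 hB _ _) (hom_dist_ub f f a0)).
  by rewrite andbT; apply: hom_dist_le => x; rewrite dist_refl.
- move=> f g fg0; apply: hom_eq => x; apply: (dist_small_eq hB) => e e0.
  by apply: le_trans (hom_dist_ub f g x) _; rewrite fg0 lee_fin ltW.
- by move=> f g; apply/eqP; rewrite eq_le !sym.
- move=> f g h; apply: hom_dist_le => x.
  by apply: le_trans (dist_tri hB _ (sval g x) _) _; apply: leeD; apply: hom_dist_ub.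
Qed.

(* Uniform limits of nonexpanding maps: CMet(A, B) is complete with B. *)
Lemma hom_complete : complete_sp B -> complete_sp H.
Proof.
move=> hBc u hu.
have cauchy_at x : cauchy_seq (fun n => sval (u n) x).
  move=> e e0; have [N hN] := hu e e0; exists N => m n hm hn.
  exact: le_lt_trans (hom_dist_ub _ _ x) (hN _ _ hm hn).
have [limf lim_cv] := choice (fun x => hBc _ (cauchy_at x)).
have lim_ne : nonexp limf.
  move=> x y; apply/lee_addgt0Pr => e e0; have e2 := divr_gt0 e0 (ltr0n R 2).
  have [N1 h1] := lim_cv x _ e2; have [N2 h2] := lim_cv y _ e2; pose n := maxn N1 N2.
  apply: le_trans (dist_tri hB _ (sval (u n) x) _) _.
  apply: le_trans (leeD (lexx _) (dist_tri hB _ (sval (u n) y) _)) _.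
  rewrite [in leRHS](splitr e) EFinD addeCA; apply: leeD.
    exact: (svalP (u n)).
  apply: leeD; first by rewrite dist_sym // ltW // h1 // leq_maxl.
  by rewrite ltW // h2 // leq_maxr.
exists (exist _ limf lim_ne) => e e0; have e2 := divr_gt0 e0 (ltr0n R 2).
have [N hN] := hu _ e2; exists N => n hn; apply: le_lt_trans (_ : _ <= (e / 2)%:E) _.
  apply: hom_dist_le => x /=; apply: (dist_le_limit hB _ _ _ N _ (lim_cv x)) => m hm.
  exact/ltW/(le_lt_trans (hom_dist_ub _ _ x))/hN.
by rewrite lte_fin ltr_pdivrMr // ltr_pMr // ltr1n.
Qed.

End HomSpace.

Section TwoPointHom.
Context {R : realType} {delta : R} {B : MetSp R}.
Hypothesis hB : gen_metric B.
Local Open Scope ereal_scope.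
Local Notation H := (hom_sp (two_sp delta) B).

Lemma two_pt_nonexp (a b : B) : dist B a b <= delta%:E ->
  nonexp (X:=two_sp delta) (fun x : bool => if x then a else b).
Proof. by move=> ab [] [] /=; rewrite ?dist_refl // dist_sym. Qed.

Lemma two_pt_dist (f : H) : dist B (sval f true) (sval f false) <= delta%:E.
Proof. exact: (svalP f true false). Qed.

Lemma two_pt_dist_lt (f g : H) c :
  dist B (sval f true) (sval g true) < c -> dist B (sval f false) (sval g false) < c ->
  dist H f g < c.
Proof.
move=> lt_t lt_f.
have [le_tf|le_ft] := leP (dist B (sval f true) (sval g true))
                          (dist B (sval f false) (sval g false)).
  by apply: le_lt_trans lt_f; apply: hom_dist_le => -[].
by apply: le_lt_trans lt_t; apply: hom_dist_le => -[] //; apply: ltW.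
Qed.

End TwoPointHom.

Lemma near_max {R : realType} {T : Type} (S : set T) (f : T -> R) {e : R} :
  0 < e -> (exists s, S s) -> (exists B, forall s, S s -> f s <= B) ->
  exists2 s, S s & forall w, S w -> f w < f s + e.
Proof.
move=> e0 [s0 Ss0] [B hB].
have supE : has_sup (f @` S).
  by split; [exists (f s0), s0 | exists B => _ [s Ss <-]; exact: hB].
have [_ [s Ss <-] near] := sup_adherent e0 supE; exists s => // w Sw.
have : f w <= sup (f @` S) by apply: sup_upper_bound => //; exists w.
by move: near; lra.
Qed.

Lemma greedy_chain {R : realType} {T : Type} (P : T -> Prop) (S : T -> T -> Prop)
    (f : T -> R) (x : T) :
  P x -> (forall p, P p -> S p p) -> (forall p q, P p -> S p q -> P q) ->
  (forall p q w, P p -> S p q -> S q w -> S p w) ->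
  (forall p, P p -> exists B, forall w, S p w -> f w <= B) ->
  exists u : nat -> T, [/\ u 0%N = x, forall n, P (u n),
    forall n m, (n <= m)%N -> S (u n) (u m) &
    forall n w, S (u n) w -> f w < f (u n.+1) + eps n].
Proof.
move=> Px Srefl Pstable Strans bounded.
have step (pn : T * nat) : exists q, P pn.1 ->
    S pn.1 q /\ forall w, S pn.1 w -> f w < f q + eps pn.2.
  case: pn => p n /=; have [Pp|nPp] := pselect (P p); last by exists p => /nPp.
  have [q Spq best] := near_max (S p) f (eps_gt0 n) (ex_intro _ p (Srefl p Pp)) (bounded p Pp).
  by exists q.
have [next hnext] := choice step.
pose u := fix u n := if n is n'.+1 then next (u n', n') else x.
have Pu n : P (u n) by elim: n => //= n IH; apply: Pstable IH (hnext (u n, n) IH).1.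
have Snext n : S (u n) (u n.+1) by exact: (hnext (u n, n) (Pu n)).1.
exists u; split => // [n m|n w Sw]; last exact: (hnext (u n, n) (Pu n)).2.
move/subnKC => <-; elim: (m - n)%N => [|k IH]; first by rewrite addn0; apply: Srefl.
by rewrite addnS; apply: Strans (Pu n) IH (Snext _).
Qed.

(* All points below
   lie at finite distance from a base point [x0], so their distances are
   real numbers [rd]. *)
Section Menger.
Context {R : realType} {X : MetSp R}.
Hypothesis hX : gen_metric X.
Hypothesis hc : complete_sp X.
Hypothesis hconv : convex X.
Variable x0 : X.
Local Notation d := (dist X).

Definition finpt (a : X) : Prop := (d x0 a < +oo)%E.
Definition rd (a b : X) : R := fine (d a b).
Definition between (a p b : X) : Prop := rd a p + rd p b = rd a b.

Lemma finpt_x0 : finpt x0.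
Proof. by rewrite /finpt dist_refl // ltry. Qed.

Lemma finpt_le {a b : X} {c : R} : finpt a -> (d a b <= c%:E)%E -> finpt b.
Proof.
rewrite /finpt => ha hab; apply: le_lt_trans (dist_tri hX x0 a b) _.
by move: ha hab; case: (d x0 a) => [r| |] //; case: (d a b) => [s| |] // _ _; rewrite -EFinD ltry.
Qed.

Lemma dist_rd {a b : X} : finpt a -> finpt b -> d a b = (rd a b)%:E.
Proof.
move=> ha hb; rewrite /rd fineK //; apply/fin_numPlt.
rewrite (lt_le_trans (ltNyr 0) (dist_ge0 hX a b)) /=.
apply: le_lt_trans (dist_tri hX a x0 b) _; rewrite (dist_sym hX a x0).
by move: ha hb; rewrite /finpt; case: (d x0 a) => [r| |] //; case: (d x0 b) => [s| |] // _ _;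
  rewrite -EFinD ltry.
Qed.

Lemma rd_ge0 (a b : X) : 0 <= rd a b.
Proof. by rewrite /rd; case: (d a b) (dist_ge0 hX a b). Qed.

Lemma rd_refl (a : X) : rd a a = 0.
Proof. by rewrite /rd dist_refl. Qed.

Lemma rd_sym (a b : X) : rd a b = rd b a.
Proof. by rewrite /rd dist_sym. Qed.

Lemma rd_tri {a b c : X} : finpt a -> finpt b -> finpt c -> rd a c <= rd a b + rd b c.
Proof. by move=> ha hb hc'; have := dist_tri hX a b c; rewrite !dist_rd // -EFinD lee_fin. Qed.

Lemma rd_pos {a b : X} : finpt a -> finpt b -> a <> b -> 0 < rd a b.
Proof.
move=> ha hb ab; rewrite lt_neqAle rd_ge0 andbT; apply/eqP => ab0; apply: ab.
by case: hX => _ _ eq0 _ _; apply: eq0; rewrite dist_rd // -ab0.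
Qed.

Lemma between_shiftL {a q p b : X} : finpt a -> finpt q -> finpt p -> finpt b ->
  between a q p -> between a p b -> between a q b /\ between q p b.
Proof.
rewrite /between => ha hq hp hb aqp apb.
by have := rd_tri ha hq hb; have := rd_tri hq hp hb; split; lra.
Qed.

Lemma between_shiftR {a p q b : X} : finpt a -> finpt p -> finpt q -> finpt b ->
  between a p b -> between p q b -> between a q b /\ between a p q.
Proof.
rewrite /between => ha hp hq hb apb pqb.
by have := rd_tri ha hq hb; have := rd_tri ha hp hq; split; lra.
Qed.

Lemma convex_between {a b : X} : finpt a -> finpt b -> a <> b ->
  exists z, [/\ finpt z, z <> a, z <> b & between a z b].
Proof.
move=> ha hb ab; have [z [za zb azb]] := hconv a b ab.
have hz : finpt z.
  apply: (finpt_le (c := rd a b) ha); rewrite -(dist_rd ha hb) -azb.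
  by rewrite -[leLHS]adde0 leeD // dist_ge0.
exists z; split => //; move: azb.
by rewrite /between (dist_rd ha hz) (dist_rd hz hb) (dist_rd ha hb) -EFinD => -[].
Qed.

Definition rconv (u : nat -> X) (l : X) : Prop :=
  forall e : R, 0 < e -> exists N, forall n, (N <= n)%N -> rd (u n) l < e.

Lemma chain_limit (u : nat -> X) : (forall n, finpt (u n)) ->
  (forall n m, (n < m)%N -> rd (u n.+1) (u m) < eps n) ->
  exists2 l, finpt l & rconv u l.
Proof.
move=> hu near.
have [l ul] : exists l, converges_to u l.
  apply: hc => e e0; have [N hN] := eps_small (divr_gt0 e0 (ltr0n R 2)).
  exists N.+1 => m m' hm hm'; rewrite dist_rd // lte_fin.
  apply: le_lt_trans (rd_tri (hu m) (hu N.+1) (hu m')) _.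
  rewrite rd_sym [ltRHS]splitr ltrD // (lt_trans (near _ _ _) (hN N _)) //.
have [N hN] := ul 1 ltr01.
have hl : finpt l by apply: (finpt_le (c := 1) (hu N)); exact/ltW/hN.
exists l => // e e0; have [M hM] := ul e e0; exists M => n hn.
by have := hM n hn; rewrite dist_rd // lte_fin.
Qed.

Lemma between_limit {a b l : X} {u : nat -> X} (n : nat) :
  finpt a -> finpt b -> finpt l -> (forall m, finpt (u m)) -> rconv u l ->
  (forall m, (n <= m)%N -> between a (u m) b) -> between a l b.
Proof.
move=> ha hb hl hu ul btw; apply/eqP; rewrite eq_le (rd_tri ha hl hb) andbT.
apply/ler_addgt0Pr => e e0; have [N hN] := ul _ (divr_gt0 e0 (ltr0n R 2)).
have := btw _ (leq_maxr N n); have := hN _ (leq_maxl N n).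
have := rd_tri ha (hu (maxn N n)) hl; have := rd_tri hl (hu (maxn N n)) hb.
by rewrite /between (rd_sym l (u (maxn N n))); lra.
Qed.

(* Every segment contains points arbitrarily close to its endpoint [z]:
   a greedy chain approaching [z] along the segment cannot stop short of
   [z], since convexity would provide a strictly better point. *)
Lemma small_step {z y : X} {r : R} : finpt z -> finpt y -> z <> y -> 0 < r ->
  exists w, [/\ finpt w, w <> z, between z w y & rd z w < r].
Proof.
move=> hz hy zy r0.
pose P p := [/\ finpt p, p <> z & between z p y].
pose S p w := [/\ finpt w, w <> z & between z w p].
have [|p [hp pz _]|p q [hp _ zpy] [hq qz zqp]|p q w [hp _ _] [hq _ zqp] [hw wz zwq]||] :=
    greedy_chain P S (fun w => - rd z w) y.
- by split => //; [exact: nesym | rewrite /between (rd_refl y) addr0].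
- by split => //; rewrite /between (rd_refl p) addr0.
- by split => //; case: (between_shiftL hz hq hp hy zqp zpy).
- by split => //; case: (between_shiftL hz hw hq hp zwq zqp).
- by move=> p _; exists 0 => w _; rewrite oppr_le0 rd_ge0.
move=> u [_ Pu Su best].
have hu n : finpt (u n) by case: (Pu n).
have [l hl ul] : exists2 l, finpt l & rconv u l.
  apply: chain_limit => // n m nm; have [_ _ zmn] := Su _ _ nm.
  have := best n (u m) (Su _ _ (ltnW nm)).
  by move: zmn; rewrite /between (rd_sym (u n.+1)); lra.
have zlu n : between z l (u n).
  apply: (between_limit n hz (hu n) hl hu ul) => m nm.
  by case: (Su _ _ nm).
have lz : l = z.
  apply: contrapT => lz.
  have [w [hw wz wl zwl]] := convex_between hz hl (nesym lz).
  have [N hN] := eps_small (rd_pos hw hl wl).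
  have Sw : S (u N) w by split => //; case: (between_shiftL hz hw hl (hu N) zwl (zlu N)).
  have := best N w Sw; have := hN N (leqnn N); have := zlu N.+1.
  by move: zwl; rewrite /between; have := rd_ge0 l (u N.+1); lra.
have [N hN] := ul r r0; have [huN uNz zuNy] := Pu N.
by exists (u N); split => //; rewrite rd_sym -lz hN.
Qed.

(* Walking from [x] towards [y] with budget [t]: the greedy chain that
   maximizes the distance from [x] subject to [rd x _ <= t] converges to a
   point [z] of the segment beyond which no point of [[z, y]] fits the
   budget. *)
Lemma segment_maximal {x y : X} {t : R} : finpt x -> finpt y -> 0 <= t ->
  exists z, [/\ finpt z, between x z y, rd x z <= t &
    forall w, finpt w -> between z w y -> rd x w <= t -> w = z].
Proof.
move=> hx hy t0.
pose P p := [/\ finpt p, between x p y & rd x p <= t].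
pose S p w := [/\ finpt w, between p w y & rd x w <= t].
have [|p [hp _ pt]|p q [hp xpy _] [hq pqy qt]|p q w [hp _ _] [hq pqy _] [hw qwy wt]||] :=
    greedy_chain P S (rd x) x.
- by split => //; rewrite /between (rd_refl x) ?add0r.
- by split => //; rewrite /between (rd_refl p) add0r.
- by split => //; case: (between_shiftR hx hp hq hy xpy pqy).
- by split => //; case: (between_shiftR hp hq hw hy pqy qwy).
- by move=> p _; exists t => w [].
move=> u [u0 Pu Su best].
have hu n : finpt (u n) by case: (Pu n).
have xuu n m : (n <= m)%N -> between x (u n) (u m).
  move=> nm; have [_ xny _] := Pu n; have [_ nmy _] := Su _ _ nm.
  by case: (between_shiftR hx (hu n) (hu m) hy xny nmy).
have [z hz uz] : exists2 z, finpt z & rconv u z.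
  apply: chain_limit => // n m nm; have := best n (u m) (Su _ _ (ltnW nm)).
  by have := xuu _ _ nm; rewrite /between; lra.
have uzy n : between (u n) z y.
  apply: (between_limit n (hu n) hy hz hu uz) => m nm.
  by case: (Su _ _ nm).
have xzy : between x z y by rewrite -u0; exact: uzy.
have xuz n : between x (u n) z.
  by have [_ xny _] := Pu n; case: (between_shiftR hx (hu n) hz hy xny (uzy n)).
exists z; split => // [|w hw zwy wt].
  apply/ler_addgt0Pr => e e0; have [N hN] := uz e e0.
  have [_ _ uNt] := Pu N; have := xuz N; have := hN N (leqnn N).
  by rewrite /between; lra.
apply: contrapT => wz; have [N hN] := eps_small (rd_pos hz hw (nesym wz)).
have [_ xzw] := between_shiftR hx hz hw hy xzy zwy.
have Sw : S (u N) w by split => //; case: (between_shiftR (hu N) hz hw hy (uzy N) zwy).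
have := best N w Sw; have := hN N (leqnn N); have := xuz N.+1.
by move: xzw; rewrite /between; have := rd_ge0 (u N.+1) z; lra.
Qed.

(* Menger: on a segment from [x] to [y] there is a point at any distance
   [t <= rd x y] from [x]: the maximal point of [segment_maximal] cannot
   fall short of [t], as [small_step] would then provide a further point. *)
Lemma reach {x y : X} {t : R} : finpt x -> finpt y -> 0 <= t -> t <= rd x y ->
  exists z, [/\ finpt z, between x z y & rd x z = t].
Proof.
move=> hx hy t0 txy; have [z [hz xzy zt maximal]] := segment_maximal hx hy t0.
have [xz_t|xz_t] := eqVneq (rd x z) t; first by exists z.
have {xz_t}xz_t : rd x z < t by rewrite lt_neqAle xz_t zt.
have zy : z <> y by move=> zy; move: xzy txy xz_t; rewrite zy /between rd_refl addr0; lra.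
have gap : 0 < t - rd x z by rewrite subr_gt0.
have [w [hw wz zwy zw]] := small_step hz hy zy gap.
have [_ xzw] := between_shiftR hx hz hw hy xzy zwy.
by case: wz; apply: maximal => //; move: zw xzw; rewrite /between; lra.
Qed.

End Menger.

Lemma convex_split {R : realType} {X : MetSp R} (hX : gen_metric X) (hc : complete_sp X)
    (hconv : convex X) (x z : X) (t s : R) :
  0 <= t -> 0 <= s -> (dist X x z <= (t + s)%:E)%E ->
  exists w, (dist X x w <= t%:E)%E /\ (dist X w z <= s%:E)%E.
Proof.
move=> t0 s0 xz.
have hx : finpt x x := finpt_x0 hX x.
have hz : finpt x z := finpt_le hX x hx xz.
have dxz := dist_rd hX x hx hz.
have [xz_t|t_xz] := leP (rd x z) t.
  by exists z; rewrite dist_refl // dxz !lee_fin.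
have [w [hw xwz xw]] := reach hX hc hconv x hx hz t0 (ltW t_xz).
exists w; rewrite (dist_rd hX x hx hw) (dist_rd hX x hw hz) !lee_fin xw lexx.
by move: xz xwz; rewrite dxz lee_fin /between; lra.
Qed.

(* Maps 2_delta -> K into the colimit of a diagram of complete convex
   spaces factor approximately through some stage: approximate both points
   in a common stage [m], then use convexity of [D m] to pull the
   approximation of the second point within distance [delta] of the first. *)
Section TwoPointApproximation.
Context {R : realType} {delta : R} {I : Type} {le : I -> I -> Prop} (hI : directed_poset le).
Context {D : I -> MetSp R} {F : forall i j, le i j -> D i -> D j}.
Hypothesis hdelta : (0 <= delta)%R.
Hypothesis hD : forall i, cmet (D i).
Hypothesis hconv : forall i, convex (D i).
Hypothesis hFiso : forall i j (h : le i j), isometric (F i j h).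
Hypothesis hFcomp : forall i j k (hij : le i j) (hjk : le j k) (hik : le i k) (x : D i),
  F j k hjk (F i j hij x) = F i k hik x.
Context {K : MetSp R} {k : forall i, D i -> K} (hk : forall i, nonexp (k i)).
Hypothesis hcolim : is_colimit F k.
Local Open Scope ereal_scope.
Local Notation H := (hom_sp (two_sp delta) K).

Lemma two_pt_dense (f : H) {e : R} : (0 < e)%R ->
  exists i (g : hom_sp (two_sp delta) (D i)), dist H (hom_map (hk i) g) f < e%:E.
Proof.
move=> e0; have e4 := divr_gt0 e0 (ltr0n R 4).
have hDg i := (hD i).1; have hKg := (colim_cmet hcolim).1.
set a := sval f true; set b := sval f false.
have [i1 [x1 near_a]] := colim_dense hcolim a _ e4.
have [i2 [x2 near_b]] := colim_dense hcolim b _ e4.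
have [m [hm1 hm2]] := upper_bound hI i1 i2.
set x := F i1 m hm1 x1; set z := F i2 m hm2 x2.
have kx : k m x = k i1 x1 := colim_compat hcolim i1 m hm1 x1.
have kz : k m z = k i2 x2 := colim_compat hcolim i2 m hm2 x2.
have xz : dist (D m) x z <= (delta + e / 2)%:E.
  rewrite -(colim_isometric hI hDg hFiso hFcomp hcolim) kx kz.
  apply: le_trans (dist_tri hKg _ a _) _; apply: le_trans (leeD (lexx _) (dist_tri hKg a b _)) _.
  have := leeD (ltW near_a) (leeD (two_pt_dist f) (ltW near_b)).
  by rewrite (dist_sym hKg (k i2 x2)) -!EFinD => /le_trans; apply; rewrite lee_fin; lra.
have e2 : (0 <= e / 2)%R by rewrite divr_ge0 // ltW.
have [w [xw wz]] := convex_split (hDg m) (hD m).2 (hconv m) x z delta (e / 2) hdelta e2 xz.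
exists m, (exist _ _ (two_pt_nonexp (hDg m) x w xw)).
apply: two_pt_dist_lt => /=.
  by rewrite kx; apply: lt_trans near_a _; rewrite lte_fin; lra.
apply: le_lt_trans (dist_tri hKg _ (k m z) _) _.
have kwz : dist K (k m w) (k m z) <= (e / 2)%:E := le_trans (colim_nonexp hcolim m w z) wz.
have kzb : dist K (k m z) b < (e / 2)%:E.
  by rewrite kz; apply: lt_trans near_b _; rewrite lte_fin; lra.
apply: le_lt_trans (leeD kwz (lexx _)) _.
by rewrite [in ltRHS](splitr e) EFinD lee_ltD.
Qed.
End TwoPointApproximation.

Theorem mainTheorem18 (R : realType) (delta : R) (hdelta : 0 < delta)
  (I : Type) (le : I -> I -> Prop) (hI : directed_poset le)
  (D : I -> MetSp R) (F : forall i j, le i j -> D i -> D j)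
  (hD : forall i, cmet (D i)) (hconv : forall i, convex (D i))
  (hFiso : forall i j (h : le i j), isometric (F i j h))
  (hFid : forall i (h : le i i) (x : D i), F i i h x = x)
  (hFcomp : forall i j k (hij : le i j) (hjk : le j k) (hik : le i k) (x : D i),
     F j k hjk (F i j hij x) = F i k hik x)
  (K : MetSp R) (k : forall i, D i -> K) (hk : forall i, nonexp (k i))
  (hcolim : is_colimit F k) :
  is_colimit
    (fun i j (h : le i j) =>
       hom_map (A:=two_sp delta) (isometric_nonexp (hFiso i j h)))
    (fun i => hom_map (A:=two_sp delta) (hk i)).
Proof.
have hDg i : gen_metric (D i) := (hD i).1.
have [hKg hKc] := colim_cmet hcolim.
apply: (@dense_cocone_colimit R I le hI (fun i => hom_sp (two_sp delta) (D i))).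

-
  by split; [exact: (hom_metric (A := two_sp delta) hKg true) | exact: hom_complete hKg hKc].
-
  by move=> i; apply/hom_map_isometric/(colim_isometric hI hDg hFiso hFcomp hcolim).
-
  by move=> i j h g; apply: hom_eq => x /=; rewrite (colim_compat hcolim).
-
  by move=> f e; apply: (two_pt_dense hI (ltW hdelta) hD hconv hFiso hFcomp hk hcolim f).
Qed.
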